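(* Let $f\in C^2([1,t_m))$ be the solution of $f''+\frac{4}{3t}f'-\frac{2}{3t^2}f(1+f)-\frac{4(f')^2}{3(1+f)}=0$, $f(1)=\beta>0$, $f'(1)=\beta_0>0$, on its maximal interval of existence $[1,t_m)$, let $0<A<2$ and $g(t)=\exp\big(-A\int_1^t\frac{f(s)(1+f(s))}{s^2f'(s)}ds\big)$. Then $$\lim_{t\to t_m}\frac{1}{g(t)f(t)^{1/2}}=0 .$$
   Context: It is known that $f>0$, $f'>0$ on $[1,t_m)$ and $f(t)\to+\infty$ as $t\to t_m$. *)

From Stdlib Require Import Reals.
From Coquelicot Require Import Coquelicot.
Open Scope R_scope.

(* Filter "t -> t_m from the left", where t_m is the (possibly infinite)
   right endpoint of the maximal interval of existence [1, t_m). *)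
Definition to_tm (tm : Rbar) : (R -> Prop) -> Prop :=
  match tm with
  | Finite a => at_left a
  | p_infty => Rbar_locally p_infty
  | m_infty => Rbar_locally m_infty
  end.

Definition gfun (A : R) (f f1 : R -> R) (t : R) : R :=
  exp (- A * RInt (fun s => f s * (1 + f s) / (s ^ 2 * f1 s)) 1 t).

(* 1. Energy estimate.  For the scaled ratio N = t^2 f'^2 / (1+f)^3 and
      E = (N - K) (1+f)^a, the ODE gives E' = u^a f'/(3u^2) Q with
      Q = 4f - 2X + (3a-1)X^2 - 3aKu (u = 1+f, X = t f'/u).  For a > 1/3 and
      3aK < 4, completing the square shows Q >= 0 once f is large, so E is
      eventually nondecreasing and N is eventually >= c for every c < 4.
   2. With c = 2 + A and w = A/c < 1/2, the log-potential
      D = w ln f - A int_1^t f(1+f)/(s^2 f') has D' >= 0 as soon as N >= c,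
      because t^2 f'^2 >= c (1+f)^3 >= c f^2 (1+f).
   3. Since 1/(g sqrt f) = exp (- D - (1/2 - w) ln f) <= exp (- D(t1) - (1/2 - w) ln f)
      and ln f -> +oo, the quotient tends to 0.
   The file first collects facts about the filter t -> tm and elementary
   calculus, then the properties of the integrand defining g, the energy
   and potential computations along the solution, and finally the theorem. *)

From Stdlib Require Import Reals Lra.
From Coquelicot Require Import Coquelicot.
Open Scope R_scope.

#[local] Instance to_tm_filter (tm : Rbar) : Filter (to_tm tm).
Proof. destruct tm as [a| |]; simpl; typeclasses eauto. Qed.

Lemma to_tm_tail (tm : Rbar) (t0 : R) (P : R -> Prop) :
  Rbar_lt t0 tm -> (forall t, t0 <= t -> Rbar_lt t tm -> P t) -> to_tm tm P.
Proof.
intros Ht0 HP. destruct tm as [a| |]; simpl in *; try contradiction.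
- assert (Hd : 0 < a - t0) by lra. exists (mkposreal _ Hd).
  intros t Hball Hta. apply HP; simpl; auto.
  apply Rabs_lt_between' in Hball. simpl in Hball. lra.
- exists t0. intros t Ht. apply HP; simpl; auto; lra.
Qed.

Lemma to_tm_witness (tm : Rbar) (lo : R) (P : R -> Prop) :
  Rbar_lt lo tm -> to_tm tm P ->
  exists t0, lo < t0 /\ Rbar_lt t0 tm /\ forall t, t0 <= t -> Rbar_lt t tm -> P t.
Proof.
intros Hlo HP. destruct tm as [a| |]; simpl in *; try contradiction.
- destruct HP as [[eps Heps] HP]; simpl in HP.
  exists (Rmax (a - eps / 2) ((lo + a) / 2)).
  assert (Hl := Rmax_l (a - eps / 2) ((lo + a) / 2)).
  assert (Hr := Rmax_r (a - eps / 2) ((lo + a) / 2)).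
  split; [lra|split; [apply Rmax_lub_lt; lra|]].
  intros t Ht Hta. apply HP; auto.
  apply Rabs_lt_between'. simpl. lra.
- destruct HP as [M HM]. exists (Rmax (M + 1) (lo + 1)).
  assert (Hl := Rmax_l (M + 1) (lo + 1)). assert (Hr := Rmax_r (M + 1) (lo + 1)).
  split; [lra|split; [exact I|]].
  intros t Ht _. apply HM. lra.
Qed.

Lemma nondecreasing_of_deriv_nonneg (F dF : R -> R) (lo : R) (tm : Rbar) :
  (forall x, lo <= x -> Rbar_lt x tm -> is_derive F x (dF x)) ->
  (forall x, lo <= x -> Rbar_lt x tm -> 0 <= dF x) ->
  forall x y, lo <= x -> x <= y -> Rbar_lt y tm -> F x <= F y.
Proof.
intros Hder Hnonneg x y Hx Hxy Hy.
assert (Hin : forall z, x <= z <= y -> lo <= z /\ Rbar_lt z tm).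
{ intros z Hz. split; [lra|]. apply Rbar_le_lt_trans with y; [simpl; lra|auto]. }
destruct (MVT_gen F x y dF) as [c [Hc Hmvt]];
  rewrite ?Rmin_left, ?Rmax_right in * by lra.
- intros z Hz. apply Hder; apply Hin; lra.
- intros z Hz. apply continuity_pt_filterlim, (ex_derive_continuous (V := R_NormedModule)).
  eexists. apply Hder; apply Hin; lra.
- assert (0 <= dF c) by (apply Hnonneg; apply Hin; lra). nra.
Qed.

Lemma exp_le_compat (x y : R) : x <= y -> exp x <= exp y.
Proof.
intros [Hlt|Heq]; [apply Rlt_le, exp_increasing; auto|rewrite Heq; apply Rle_refl].
Qed.

Lemma exp_neg_log_to_zero {T : Type} (F : (T -> Prop) -> Prop) (u : T -> R) (C k : R) :
  0 < k -> filterlim u F (Rbar_locally p_infty) ->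
  filterlim (fun x => exp (C - k * ln (u x))) F (locally 0).
Proof.
intros Hk Hu.
apply (filterlim_comp _ _ _ (fun x => C - k * ln (u x)) exp _ (Rbar_locally m_infty));
  [|exact is_lim_exp_m].
apply (filterlim_comp _ _ _ (fun x => ln (u x)) (fun y => C - k * y) _ (Rbar_locally p_infty)).
- exact (filterlim_comp _ _ _ u ln _ _ _ Hu is_lim_ln_p).
- intros P [M HM]. exists ((C - M) / k). intros y Hy. apply HM.
  apply Rmult_lt_compat_l with (r := k) in Hy; auto.
  replace (k * ((C - M) / k)) with (C - M) in Hy by (field; lra). lra.
Qed.

Lemma exp_log_to_infty {T : Type} (F : (T -> Prop) -> Prop) (u : T -> R) (a : R) :
  0 < a -> filterlim u F (Rbar_locally p_infty) ->
  filterlim (fun x => exp (a * ln (1 + u x))) F (Rbar_locally p_infty).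
Proof.
intros Ha Hu.
apply (filterlim_comp _ _ _ (fun x => a * ln (1 + u x)) exp _ (Rbar_locally p_infty));
  [|exact is_lim_exp_p].
apply (filterlim_comp _ _ _ (fun x => ln (1 + u x)) (fun y => a * y) _ (Rbar_locally p_infty)).
- apply (filterlim_comp _ _ _ (fun x => 1 + u x) ln _ (Rbar_locally p_infty));
    [|exact is_lim_ln_p].
  apply (filterlim_comp _ _ _ u (fun y => 1 + y) _ _ _ Hu).
  intros P [M HM]. exists (M - 1). intros y Hy. apply HM. lra.
- intros P [M HM]. exists (M / a). intros y Hy. apply HM.
  apply Rmult_lt_compat_l with (r := a) in Hy; auto.
  replace (a * (M / a)) with M in Hy by (field; lra). lra.
Qed.

Definition integrand (f f1 : R -> R) (s : R) : R := f s * (1 + f s) / (s ^ 2 * f1 s).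

Lemma integrand_continuous (f f1 : R -> R) (x : R) :
  continuous f x -> continuous f1 x -> f1 x <> 0 -> x <> 0 ->
  continuous (integrand f f1) x.
Proof.
intros Hf Hf1 Hf1x Hx. apply continuity_pt_filterlim in Hf, Hf1.
apply continuity_pt_filterlim, continuity_pt_div.
- apply continuity_pt_mult; auto.
  apply continuity_pt_plus; auto. apply continuity_pt_const. intros u v; auto.
- apply continuity_pt_mult; auto.
  apply derivable_continuous_pt, derivable_pt_pow.
- apply Rmult_integral_contrapositive_currified; auto. apply pow_nonzero; auto.
Qed.

Lemma continuous_clamped (g : R -> R) (lo : R) (tm : Rbar) :
  filterlim g (at_right lo) (locally (g lo)) ->
  (forall x, lo < x -> Rbar_lt x tm -> continuous g x) ->
  forall x, lo <= x -> Rbar_lt x tm -> continuous (fun s => g (Rmax lo s)) x.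
Proof.
intros Hright Hcont x Hx Hxtm. unfold continuous.
destruct (Req_dec x lo) as [->|Hne].
- rewrite Rmax_left by lra.
  apply filterlim_locally. intros eps.
  destruct (proj1 (filterlim_locally _ _) Hright eps) as [d Hd].
  exists d. intros y Hy.
  destruct (Rle_dec y lo).
  + rewrite Rmax_left by lra. apply ball_center.
  + rewrite Rmax_right by lra. apply Hd; auto; lra.
- rewrite Rmax_right by lra.
  apply filterlim_ext_loc with g; [|apply Hcont; auto; lra].
  apply (filter_imp (fun y => lo < y)); [intros y Hy; rewrite Rmax_right; lra|].
  apply open_gt. lra.
Qed.

Definition scaled_ratio (f f1 : R -> R) (t : R) : R := t ^ 2 * f1 t ^ 2 / (1 + f t) ^ 3.

Definition energy (f f1 : R -> R) (K a t : R) : R :=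
  (scaled_ratio f f1 t - K) * exp (a * ln (1 + f t)).

(* The derivative of the energy along a solution of the ODE, written with
   u = 1 + f and X = t f' / u. *)
Definition energy_slope (f f1 : R -> R) (K a t : R) : R :=
  let u := 1 + f t in
  let X := t * f1 t / u in
  exp (a * ln u) * f1 t / (3 * u ^ 2) * (4 * f t - 2 * X + (3 * a - 1) * X ^ 2 - 3 * a * K * u).

(* The log-potential D = w ln f - A int_1^t integrand with weight w = A / c;
   it is the logarithm of g f^w. *)
Definition log_potential (f f1 : R -> R) (A c t : R) : R :=
  A / c * ln (f t) - A * RInt (integrand f f1) 1 t.

Lemma inv_gfun_sqrt (A c : R) (f f1 : R -> R) (t : R) : 0 < f t ->
  1 / (gfun A f f1 t * sqrt (f t)) = exp (- log_potential f f1 A c t - (/ 2 - A / c) * ln (f t)).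
Proof.
intros Hf. unfold gfun, log_potential, integrand.
rewrite <- Rpower_sqrt by auto. unfold Rpower.
rewrite <- exp_plus. unfold Rdiv at 1. rewrite Rmult_1_l, <- exp_Ropp.
f_equal. ring.
Qed.

Lemma quadratic_lower_bound (b X : R) : 0 < b -> - / b <= b * X ^ 2 - 2 * X.
Proof.
intros Hb.
assert (Hsq : b * X ^ 2 - 2 * X + / b = (b * X - 1) ^ 2 / b) by (field; lra).
assert (0 <= (b * X - 1) ^ 2 / b)
  by (apply Rdiv_le_0_compat; [apply pow2_ge_0|lra]).
lra.
Qed.

Section Solution.
Variables (f f1 f2 : R -> R) (tm : Rbar).
Hypotheses
  (Hd1 : forall t, 1 < t -> Rbar_lt t tm -> is_derive f t (f1 t))
  (Hd2 : forall t, 1 < t -> Rbar_lt t tm -> is_derive f1 t (f2 t))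
  (Hr0 : filterlim f (at_right 1) (locally (f 1)))
  (Hr1 : filterlim f1 (at_right 1) (locally (f1 1)))
  (Hode : forall t, 1 <= t -> Rbar_lt t tm ->
     f2 t + 4 / (3 * t) * f1 t - 2 / (3 * t ^ 2) * f t * (1 + f t)
       - 4 * (f1 t) ^ 2 / (3 * (1 + f t)) = 0)
  (Hpos : forall t, 1 <= t -> Rbar_lt t tm -> 0 < f t /\ 0 < f1 t).

Let continuous_f t : 1 < t -> Rbar_lt t tm -> continuous f t.
Proof. intros. apply (ex_derive_continuous (V := R_NormedModule)). eexists; auto. Qed.

Let continuous_f1 t : 1 < t -> Rbar_lt t tm -> continuous f1 t.
Proof. intros. apply (ex_derive_continuous (V := R_NormedModule)). eexists; auto. Qed.

(* The integrand is integrable on [1, b] for every b < tm: on [1, b] it agrees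
   with the integrand built from f and f' frozen to the left of 1, which is
   continuous on [1, b] by the one-sided continuity of f and f' at 1. *)
Lemma integrand_integrable (b : R) : 1 < b -> Rbar_lt b tm -> ex_RInt (integrand f f1) 1 b.
Proof.
intros Hb Hbtm.
apply ex_RInt_ext with (integrand (fun s => f (Rmax 1 s)) (fun s => f1 (Rmax 1 s))).
- rewrite Rmin_left, Rmax_right by lra. intros x Hx.
  unfold integrand. rewrite Rmax_right by lra. reflexivity.
- apply (ex_RInt_continuous (V := R_CompleteNormedModule)).
  rewrite Rmin_left, Rmax_right by lra. intros z Hz.
  assert (Hztm : Rbar_lt z tm) by (apply Rbar_le_lt_trans with b; [simpl; lra|auto]).
  apply integrand_continuous.
  + apply (continuous_clamped f 1 tm); auto; lra.
  + apply (continuous_clamped f1 1 tm); auto; lra.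
  + rewrite Rmax_right by lra. apply Rgt_not_eq, Hpos; auto; lra.
  + lra.
Qed.

Lemma integrand_primitive (t : R) : 1 < t -> Rbar_lt t tm ->
  is_derive (fun x => RInt (integrand f f1) 1 x) t (integrand f f1 t).
Proof.
intros Ht Httm.
apply (is_derive_RInt (V := R_NormedModule) _ _ 1).
- apply (filter_imp (fun y => 1 < y /\ Rbar_lt y tm)).
  + intros y [Hy Hytm]. apply (RInt_correct (V := R_CompleteNormedModule)).
    apply integrand_integrable; auto.
  + apply (open_and _ _ (open_gt 1) (open_Rbar_lt tm)). auto.
- apply integrand_continuous; auto.
  + apply Rgt_not_eq, Hpos; auto; lra.
  + lra.
Qed.

Lemma energy_derivative (K a t : R) : 1 < t -> Rbar_lt t tm ->
  is_derive (energy f f1 K a) t (energy_slope f f1 K a t).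
Proof.
intros Ht Httm. unfold energy_slope; cbv zeta.
destruct (Hpos t) as [Hf Hf1]; auto; try lra.
assert (Hf2 : f2 t = - 4 / (3 * t) * f1 t + 2 / (3 * t ^ 2) * f t * (1 + f t)
                     + 4 * f1 t ^ 2 / (3 * (1 + f t)))
  by (generalize (Hode t ltac:(lra) Httm); lra).
unfold energy, scaled_ratio. auto_derive.
- repeat split; try (eexists; apply Hd1 || apply Hd2; auto); try lra.
  apply Rgt_not_eq. repeat apply Rmult_lt_0_compat; lra.
- replace (Derive (fun x => f x) t) with (f1 t)
    by (symmetry; apply is_derive_unique, Hd1; auto).
  replace (Derive (fun x => f1 x) t) with (f2 t)
    by (symmetry; apply is_derive_unique, Hd2; auto).
  rewrite Hf2. field. lra.
Qed.

Lemma energy_derivative_nonneg (K a t : R) : 1 < t -> Rbar_lt t tm -> 1 < 3 * a ->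
  3 * a * K * (1 + f t) + / (3 * a - 1) <= 4 * f t ->
  0 <= energy_slope f f1 K a t.
Proof.
intros Ht Httm Ha Hlarge. unfold energy_slope; cbv zeta.
destruct (Hpos t) as [Hf Hf1]; auto; try lra.
apply Rmult_le_pos.
- apply Rdiv_le_0_compat.
  + apply Rmult_le_pos; [apply Rlt_le, exp_pos|lra].
  + apply Rmult_lt_0_compat; [|apply pow_lt]; lra.
- generalize (quadratic_lower_bound (3 * a - 1) (t * f1 t / (1 + f t)) ltac:(lra)). lra.
Qed.

(* Energy estimate: the scaled ratio t^2 f'^2 / (1+f)^3 is eventually
   above every constant c < 4.  Take K between c and 4 and a slightly above
   1/3 with 3aK < 4; then E = (N - K)(1+f)^a is nondecreasing once f is
   large, so N - K >= E(t0) (1+f)^(-a), and the right side tends to 0. *)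
Lemma scaled_ratio_eventually_ge (c : R) : c < 4 -> Rbar_lt 1 tm ->
  filterlim f (to_tm tm) (Rbar_locally p_infty) ->
  to_tm tm (fun t => c <= scaled_ratio f f1 t).
Proof.
intros Hc Htm Hblow.
set (K := (c + 4) / 2). set (a := (1 + (4 - K) / 8) / 3).
assert (Ha : 1 < 3 * a) by (unfold a, K; lra).
assert (HaK : 0 < 4 - 3 * a * K).
{ replace (4 - 3 * a * K) with ((4 - K) * (8 - K) / 8) by (unfold a; field).
  unfold K. apply Rdiv_lt_0_compat; [apply Rmult_lt_0_compat|]; lra. }
set (M := (3 * a * K + / (3 * a - 1)) / (4 - 3 * a * K)).
assert (Hfar : to_tm tm (fun t => M < f t)) by (apply Hblow; exists M; auto).
destruct (to_tm_witness tm 1 _ Htm Hfar) as [t0 [Ht0 [Ht0tm Hlarge]]].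
assert (Hmono : forall t, t0 <= t -> Rbar_lt t tm -> energy f f1 K a t0 <= energy f f1 K a t).
{ intros t Ht Httm.
  apply (nondecreasing_of_deriv_nonneg _ (energy_slope f f1 K a) t0 tm); auto; try lra;
    intros x Hx Hxtm; [apply energy_derivative|apply energy_derivative_nonneg]; auto; try lra.
  assert (HM : (4 - 3 * a * K) * M = 3 * a * K + / (3 * a - 1)) by (unfold M; field; lra).
  assert (0 < (4 - 3 * a * K) * (f x - M))
    by (apply Rmult_lt_0_compat; auto; generalize (Hlarge x Hx Hxtm); lra).
  nra. }
set (E0 := energy f f1 K a t0).
assert (Hweight : to_tm tm (fun t => Rabs E0 < (K - c) * exp (a * ln (1 + f t)))).
{ apply (filter_imp (fun t => Rabs E0 / (K - c) < exp (a * ln (1 + f t)))).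
  - intros t Ht. assert (HKc : 0 < K - c) by (unfold K; lra).
    replace (Rabs E0) with ((K - c) * (Rabs E0 / (K - c))) by (field; lra).
    apply Rmult_lt_compat_l; auto.
  - apply (exp_log_to_infty _ f a); [lra|exact Hblow|]. exists (Rabs E0 / (K - c)). auto. }
assert (Hlower : to_tm tm (fun t => E0 <= energy f f1 K a t))
  by (apply (to_tm_tail tm t0); auto).
generalize (filter_and _ _ Hweight Hlower). apply filter_imp.
intros t [Hw Hl]. unfold energy in Hl.
set (L := exp (a * ln (1 + f t))) in *.
assert (HL : 0 < L) by apply exp_pos.
assert (- Rabs E0 <= E0) by (generalize (Rle_abs (- E0)); rewrite Rabs_Ropp; lra).
assert (0 < (scaled_ratio f f1 t - c) * L) by nra.
assert (0 < scaled_ratio f f1 t - c) by (apply (Rmult_lt_reg_r L); lra).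
lra.
Qed.

(* Once the scaled ratio is at least c, D' = A (t^2 f'^2 - c f^2 (1+f)) / (c f t^2 f')
   is nonnegative because t^2 f'^2 >= c (1+f)^3 >= c f^2 (1+f). *)
Lemma log_potential_nondecreasing (A c t1 : R) : 0 <= A -> 0 < c -> 1 < t1 ->
  (forall t, t1 <= t -> Rbar_lt t tm -> c <= scaled_ratio f f1 t) ->
  forall t, t1 <= t -> Rbar_lt t tm -> log_potential f f1 A c t1 <= log_potential f f1 A c t.
Proof.
intros HA Hc Ht1 Hratio t Ht Httm.
apply (nondecreasing_of_deriv_nonneg _
         (fun x => A / c * (f1 x / f x) - A * integrand f f1 x) t1 tm); try lra; auto;
  intros x Hx Hxtm; destruct (Hpos x) as [Hf Hf1]; auto; try lra.
- apply (is_derive_minus (K := R_AbsRing) (V := R_NormedModule)).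
  + auto_derive.
    * split; [eexists; apply Hd1; auto; lra|lra].
    * replace (Derive (fun x => f x) x) with (f1 x)
        by (symmetry; apply is_derive_unique, Hd1; auto; lra).
      field. lra.
  + apply is_derive_scal, integrand_primitive; auto; lra.
- set (u := 1 + f x).
  assert (Hu : 0 < u) by (unfold u; lra).
  assert (Hcu : c * u ^ 3 <= x ^ 2 * f1 x ^ 2).
  { replace (x ^ 2 * f1 x ^ 2) with (scaled_ratio f f1 x * u ^ 3)
      by (unfold scaled_ratio, u; field; lra).
    apply Rmult_le_compat_r; [apply pow_le; lra|auto]. }
  assert (Hfu : f x ^ 2 * u <= u ^ 3) by (unfold u; nra).
  replace (A / c * (f1 x / f x) - A * integrand f f1 x)
    with (A * (x ^ 2 * f1 x ^ 2 - c * (f x ^ 2 * u)) / (c * f x * x ^ 2 * f1 x))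
    by (unfold integrand, u; field; repeat split; lra).
  apply Rdiv_le_0_compat; [apply Rmult_le_pos; nra|].
  repeat apply Rmult_lt_0_compat; lra.
Qed.

End Solution.

Theorem corollarys
  (beta beta0 A : R) (tm : Rbar) (f f1 f2 : R -> R)
  (Hbeta : 0 < beta) (Hbeta0 : 0 < beta0)
  (HA0 : 0 < A) (HA2 : A < 2)
  (Htm : Rbar_lt 1 tm)
  (Hd1 : forall t, 1 < t -> Rbar_lt t tm -> is_derive f t (f1 t))
  (Hd2 : forall t, 1 < t -> Rbar_lt t tm -> is_derive f1 t (f2 t))
  (Hc2 : forall t, 1 < t -> Rbar_lt t tm -> continuous f2 t)
  (Hr0 : filterlim f (at_right 1) (locally (f 1)))
  (Hr1 : filterlim f1 (at_right 1) (locally (f1 1)))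
  (Hr2 : filterlim f2 (at_right 1) (locally (f2 1)))
  (Hode : forall t, 1 <= t -> Rbar_lt t tm ->
     f2 t + 4 / (3 * t) * f1 t - 2 / (3 * t ^ 2) * f t * (1 + f t)
       - 4 * (f1 t) ^ 2 / (3 * (1 + f t)) = 0)
  (Hi0 : f 1 = beta) (Hi1 : f1 1 = beta0)
  (Hpos : forall t, 1 <= t -> Rbar_lt t tm -> 0 < f t /\ 0 < f1 t)
  (Hblow : filterlim f (to_tm tm) (Rbar_locally p_infty)) :
  filterlim (fun t => 1 / (gfun A f f1 t * sqrt (f t))) (to_tm tm) (locally 0).
Proof.
set (c := 2 + A).
assert (Hdecay : 0 < / 2 - A / c).
{ replace (/ 2 - A / c) with ((2 - A) / (2 * c)) by (unfold c; field; lra).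
  apply Rdiv_lt_0_compat; unfold c; lra. }
destruct (to_tm_witness tm 1 _ Htm
  (scaled_ratio_eventually_ge f f1 f2 tm Hd1 Hd2 Hode Hpos c ltac:(unfold c; lra) Htm Hblow))
  as [t1 [Ht1 [Ht1tm Hratio]]].
set (D1 := log_potential f f1 A c t1).
apply (filterlim_le_le (fun _ => 0) _ (fun t => exp (- D1 - (/ 2 - A / c) * ln (f t))) (Finite 0)).
- apply (to_tm_tail tm t1); auto. intros t Ht Httm.
  destruct (Hpos t) as [Hf _]; auto; try lra.
  rewrite (inv_gfun_sqrt A c) by auto.
  split; [apply Rlt_le, exp_pos|].
  apply exp_le_compat.
  generalize (log_potential_nondecreasing f f1 f2 tm Hd1 Hd2 Hr0 Hr1 Hpos A c t1
                ltac:(lra) ltac:(unfold c; lra) Ht1 Hratio t Ht Httm).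
  fold D1. lra.
- apply filterlim_const.
- apply exp_neg_log_to_zero; auto.
Qed.
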